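(* There is a universal constant $\alpha>1$ such that the following holds. Let $p\ge 2$ and $k\ge1$ be integers and put $r=r(p,k)=\alpha\, p\log(pk)$. Let $n\ge 1$ and let $S_1,\dots,S_\ell\subseteq[n]$ be a sequence of sets, each of size $k$, with $\ell> r^k$, which is $r$-spread. Then there are $p$ distinct indices $i_1,\dots,i_p\in[\ell]$ such that $S_{i_1},\dots,S_{i_p}$ are pairwise disjoint.
   Context: A sequence (repetitions allowed) of sets $S_1,\dots,S_\ell\subseteq[n]$, each of size $k$, is called $r$-spread if for every non-empty set $Z\subseteq[n]$, the number of indices $i\in[\ell]$ with $Z\subseteq S_i$ is at most $r^{k-|Z|}$. All logarithms are base $2$. *)

From mathcomp Require Import all_boot.
From Stdlib Require Import Reals.

Set Implicit Arguments.
Unset Strict Implicit.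
Unset Printing Implicit Defensive.

Definition log2 (x : R) : R := (ln x / ln 2)%R.

Definition spread (n ell k : nat) (r : R) (S : 'I_ell -> {set 'I_n}) : Prop :=
  forall Z : {set 'I_n}, Z != set0 ->
    (INR #|[set i | Z \subset S i]| <= r ^ (k - #|Z|))%R.

From Stdlib Require Import Reals Lra.
From mathcomp Require Import all_boot zify.

Set Implicit Arguments.
Unset Strict Implicit.
Unset Printing Implicit Defensive.

(* Colour the points with m = 2p colours and L = log k + 1 rounds. For a colour
   c, run L rounds of a shrinking process on the family: in round j the layer
   W_j consists of the points of colour c and round j, each live set A is
   replaced by its fragment (the first live set inside W_j ∪ A, minus W_j), and
   A dies if its fragment has more than k / 2^(j+1) points. A set surviving all
   rounds has an empty fragment, so some S_i lies inside colour c.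
   A pair (colouring, i) whose set dies in round j with a fragment F of size t
   is determined by the colouring with F painted into W_j, the set F (a subset
   of the first fragment of round j of that colouring, which has at most
   k / 2^j < 2t points), the old colours on F, and i, one of at most r^(k-t)
   indices with F ⊆ S_i by spreadness. Hence there are at most
   #colourings * (4mL)^t r^(k-t) such pairs, and for r >= 16 mL at most
   #colourings * r^k / 2 pairs in total. A colour fails when all ell > r^k sets
   die, so it fails in fewer than half of the colourings, and some colouring has
   at least p of its 2p colours succeeding: their sets are pairwise disjoint. *)

Lemma head_filter_subpred (T : eqType) (d : T) (P P' : pred T) s :
  subpred P' P -> P' (head d (filter P s)) -> P' d ->
  head d (filter P' s) = head d (filter P s).
Proof.
move=> sP'P; elim: s => [|a s IHs] //=.
case Pa: (P a) => /=; first by move=> ->.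
case P'a: (P' a) => /=; first by move: (sP'P _ P'a); rewrite Pa.
by move=> P'h P'd; rewrite IHs.
Qed.

Lemma card_set_pairE (A B : finType) (P : pred (A * B)) :
  #|[set v | P v]| = \sum_(a : A) #|[set b | P (a, b)]|.
Proof.
rewrite -sum1dep_card (eq_bigl (fun v => xpredT v.1 && P (v.1, v.2))); last by case.
rewrite -(pair_big_dep xpredT (fun a b => P (a, b)) (fun _ _ => 1)).
by apply: eq_bigr => a _; rewrite sum1dep_card.
Qed.

Section FragmentProcess.
Variables (n ell : nat) (S : 'I_ell -> {set 'I_n}) (k : nat).

(* [G i = None] means that the set of index [i] has died. *)
Definition live_family := 'I_ell -> option {set 'I_n}.

(* In index order; [set0] if no live set is contained in [X]. *)
Definition first_live (G : live_family) (X : {set 'I_n}) : {set 'I_n} :=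
  head set0 [seq A : {set 'I_n} <- pmap G (enum 'I_ell) | A \subset X].

Definition fragment (G : live_family) W A := first_live G (W :|: A) :\: W.

Definition shrink_round (s : nat) (W : {set 'I_n}) (G : live_family) : live_family :=
  fun i => if G i is Some A then
     (if #|fragment G W A| <= s then Some (fragment G W A) else None) else None.

(* Round [j] uses the layer [W j] and keeps fragments of size at most [k / 2^(j+1)]. *)
Fixpoint fragment_process (W : nat -> {set 'I_n}) (j : nat) : live_family :=
  if j is j'.+1 then shrink_round (k %/ 2 ^ j) (W j') (fragment_process W j')
  else fun i => Some (S i).

Lemma first_live_sub G (X : {set 'I_n}) : first_live G X \subset X.
Proof.
rewrite /first_live; have := filter_all (fun A : {set 'I_n} => A \subset X) (pmap G (enum 'I_ell)).
by case: (filter _ _) => [|a s] /=; [rewrite sub0set | case/andP].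
Qed.

Lemma eq_first_live G G' (X : {set 'I_n}) : G =1 G' -> first_live G X = first_live G' X.
Proof. by move=> eqG; rewrite /first_live (eq_pmap eqG). Qed.

Lemma first_live_shrink G (X X' : {set 'I_n}) : X' \subset X -> first_live G X \subset X' ->
  first_live G X' = first_live G X.
Proof.
move=> sX'X sFX'; apply: head_filter_subpred => //; last by rewrite sub0set.
by move=> A /= sAX'; apply: subset_trans sAX' sX'X.
Qed.

Lemma first_live_cases G (X : {set 'I_n}) :
  first_live G X = set0 \/ exists i, G i = Some (first_live G X).
Proof.
rewrite /first_live.
case E: (filter _ _) => [|a s] /=; [by left | right].
have : a \in [seq A : {set 'I_n} <- pmap G (enum 'I_ell) | A \subset X] by rewrite E mem_head.
by rewrite mem_filter mem_pmap => /andP [_ /mapP [i _ Gi]]; exists i.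
Qed.

Lemma first_live_witness (G : live_family) (X : {set 'I_n}) i (A : {set 'I_n}) :
  G i = Some A -> A \subset X -> exists i', G i' = Some (first_live G X).
Proof.
move=> Gi sAX.
have : A \in [seq A : {set 'I_n} <- pmap G (enum 'I_ell) | A \subset X].
  by rewrite mem_filter sAX mem_pmap; apply/mapP; exists i; rewrite ?mem_enum.
rewrite /first_live; case E: (filter _ _) => [|a s] //= _.
have : a \in [seq A : {set 'I_n} <- pmap G (enum 'I_ell) | A \subset X] by rewrite E mem_head.
by rewrite mem_filter mem_pmap => /andP [_ /mapP [i' _ Gi']]; exists i'.
Qed.

Lemma fragment_sub G (W A : {set 'I_n}) : fragment G W A \subset A.
Proof.
apply/subsetP => x; rewrite /fragment inE => /andP [xW xF].
by have := subsetP (first_live_sub G (W :|: A)) x xF; rewrite inE (negbTE xW).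
Qed.

Lemma eq_shrink_round s W G G' : G =1 G' -> shrink_round s W G =1 shrink_round s W G'.
Proof.
move=> eqG i; rewrite /shrink_round eqG.
by case: (G' i) => // A; rewrite /fragment (eq_first_live _ eqG).
Qed.

Lemma eq_fragment_process W W' j : (forall j', j' < j -> W j' = W' j') ->
  fragment_process W j =1 fragment_process W' j.
Proof.
elim: j => [|j IHj] eqW //=.
by rewrite eqW //; apply/eq_shrink_round/IHj => j' lt_j'j; apply: eqW; lia.
Qed.

Hypothesis card_S : forall i, #|S i| = k.

Lemma fragment_process_live W j i A : fragment_process W j i = Some A ->
  [/\ A \subset S i, #|A| <= k %/ 2 ^ j & forall j', j' < j -> [disjoint A & W j']].
Proof.
elim: j i A => [|j IHj] i A /=.
  by case=> <-; rewrite expn0 divn1 card_S; split.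
rewrite /shrink_round; case E: (fragment_process W j i) => [B|] //.
case: ifP => // small [<-].
have [sBS _ disjB] := IHj _ _ E.
have sFB := fragment_sub (fragment_process W j) (W j) B.
split => //; first exact: subset_trans sFB sBS.
move=> j' lt_j'Sj; case: (ltngtP j' j) => [lt_j'j | lt_jj' | ->].
- exact: disjointWl sFB (disjB _ lt_j'j).
- lia.
- by rewrite /fragment disjoints_subset; apply/subsetP => x; rewrite !inE => /andP [].
Qed.

Lemma fragment_process_cover W j i A : fragment_process W j i = Some A ->
  exists i', forall x, x \in S i' -> x \in A \/ exists2 j', j' < j & x \in W j'.
Proof.
elim: j i A => [|j IHj] i A /=.
  by case=> <-; exists i => x; left.
rewrite /shrink_round; case E: (fragment_process W j i) => [B|] //.
case: ifP => // _ [<-].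
have [i2 Ei2] := first_live_witness (X := W j :|: B) E (subsetUr _ _).
have [i' coverS] := IHj _ _ Ei2.
exists i' => x /coverS [xF | [j' lt_j'j xW]].
  by case xW: (x \in W j); [right; exists j | left; rewrite /fragment inE xW].
by right; exists j' => //; lia.
Qed.

End FragmentProcess.

Section Colourings.
Variables (n ell : nat) (S : 'I_ell -> {set 'I_n}) (k : nat).
Hypothesis card_S : forall i, #|S i| = k.
Variables (m L : nat) (c : 'I_m).

Notation col := ('I_m * 'I_L)%type.
Notation colg := {ffun 'I_n -> col}.

Definition layer (chi : colg) (j : nat) : {set 'I_n} :=
  [set x | ((chi x).1 == c) && ((chi x).2 == j :> nat)].
Definition process chi j := fragment_process S k (layer chi) j.
Definition frag j chi i :=
  if process chi j i is Some A then fragment (process chi j) (layer chi j) A else set0.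
Definition dies_with j t chi i := (process chi j i != None) && (#|frag j chi i| == t).
Definition round_first j chi := first_live (process chi j) (layer chi j).
Definition size_cap j := k %/ 2 ^ j.
Definition cover_count (D : {set 'I_n}) := #|[set i | D \subset S i]|.
Definition max_cover t := \max_(D : {set 'I_n} | (#|D| == t) && (D != set0)) cover_count D.

Lemma card_round_first j chi : #|round_first j chi| <= size_cap j.
Proof.
rewrite /round_first; case: (first_live_cases (process chi j) (layer chi j)) => [->|[i Ei]].
  by rewrite cards0.
by have [] := fragment_process_live card_S Ei.
Qed.

Section Round.
Variable j : 'I_L.
Let c0 : col := (c, j).

(* A pair [(chi, i)] dying in round [j] is encoded by painting its fragment with
   colour [(c, j)] and storing the old colours of the fragment separately. The
   painted fragment joins the layer of round [j] without changing the earlier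
   rounds, so it becomes a subset of the first fragment of round [j]. *)
Definition recolor chi i : colg := [ffun x => if x \in frag j chi i then c0 else chi x].
Definition restrict chi i : colg := [ffun x => if x \in frag j chi i then chi x else c0].
Definition encode (u : colg * 'I_ell) : colg * ({set 'I_n} * (colg * 'I_ell)) :=
  (recolor u.1 u.2, (frag j u.1 u.2, (restrict u.1 u.2, u.2))).

Lemma encode_inj : injective encode.
Proof.
move=> [chi i] [chi' i'] [/ffunP eq_rec eq_frag /ffunP eq_res /= eq_i].
subst i'; congr (_, _); apply/ffunP => x.
have := eq_rec x; have := eq_res x; rewrite !ffunE /= -eq_frag.
by case: (x \in frag j chi i) => [-> | _ ->].
Qed.

Section Recolor.
Variables (chi : colg) (i : 'I_ell) (A : {set 'I_n}).
Hypothesis live_i : process chi j i = Some A.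

Lemma frag_live : frag j chi i = fragment (process chi j) (layer chi j) A.
Proof. by rewrite /frag live_i. Qed.

Lemma frag_sub_live : frag j chi i \subset A.
Proof. by rewrite frag_live fragment_sub. Qed.

Lemma layer_recolor_lt j' : j' < j -> layer (recolor chi i) j' = layer chi j'.
Proof.
move=> lt_j'j; have [_ _ disjA] := fragment_process_live card_S live_i.
apply/setP => x; rewrite /layer !inE ffunE; case: ifP => // xF.
have xA : x \in A := subsetP frag_sub_live x xF.
move: (disjointFr (disjA j' lt_j'j) xA); rewrite inE => ->.
by rewrite /c0 /= eqxx /=; apply/negbTE/eqP => eq_j; lia.
Qed.

Lemma process_recolor : process (recolor chi i) j =1 process chi j.
Proof. exact: eq_fragment_process layer_recolor_lt. Qed.

Lemma layer_recolor : layer (recolor chi i) j = layer chi j :|: frag j chi i.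
Proof.
apply/setP => x; rewrite in_setU /layer !inE ffunE.
by case: (x \in frag j chi i); rewrite /= ?eqxx ?orbT ?orbF.
Qed.

Lemma round_first_recolor :
  round_first j (recolor chi i) = first_live (process chi j) (layer chi j :|: A).
Proof.
rewrite /round_first layer_recolor (eq_first_live _ process_recolor).
apply: first_live_shrink; first by rewrite setUS ?frag_sub_live.
by apply/subsetP => x xF; rewrite in_setU frag_live /fragment in_setD xF andbT orbN.
Qed.

End Recolor.

Definition encode_range t := [set v : colg * ({set 'I_n} * (colg * 'I_ell)) |
  [&& v.2.1 \subset round_first j v.1, #|v.2.1| == t,
      v.2.2.1 \in pffun_on c0 v.2.1 (setT : {set col}) & v.2.1 \subset S v.2.2.2]].

Lemma encode_dies_with chi i t : dies_with j t chi i -> encode (chi, i) \in encode_range t.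
Proof.
rewrite /dies_with; case E: (process chi j i) => [A|] //= card_t.
have [sAS _ _] := fragment_process_live card_S E.
have sFS : frag j chi i \subset S i := subset_trans (frag_sub_live E) sAS.
have sFT : frag j chi i \subset round_first j (recolor chi i).
  by rewrite (round_first_recolor E) (frag_live E) subsetDl.
have on_F : restrict chi i \in pffun_on c0 (frag j chi i) (setT : {set col}).
  apply/pffun_onP; split=> [|y _]; last by rewrite inE.
  by apply/subsetP => x; rewrite inE ffunE; case: ifP; rewrite ?eqxx.
by rewrite inE /= sFT card_t on_F sFS.
Qed.

Lemma card_encode_range t : 0 < t ->
  #|encode_range t| <= #|colg| * (2 ^ size_cap j * (#|{: col}| ^ t * max_cover t)).
Proof.
move=> t_gt0; rewrite card_set_pairE -sum_nat_const; apply: leq_sum => chi _.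
rewrite card_set_pairE.
apply: (@leq_trans (\sum_(D : {set 'I_n}) if D \in powerset (round_first j chi)
   then #|{: col}| ^ t * max_cover t else 0)); last first.
  rewrite -big_mkcond sum_nat_const card_powerset leq_mul2r.
  by rewrite leq_exp2l ?card_round_first ?orbT.
apply: leq_sum => D _; rewrite card_set_pairE.
have [DT | nDT] := boolP (D \in powerset (round_first j chi)); last first.
  rewrite big1 // => g _; apply/eqP; rewrite cards_eq0; apply/eqP/setP => i.
  by rewrite !inE /=; move: nDT; rewrite inE => /negbTE ->.
have [card_D | ncard_D] := eqVneq #|D| t; last first.
  rewrite big1 // => g _; apply/eqP; rewrite cards_eq0; apply/eqP/setP => i.
  by rewrite !inE /= andbF.
rewrite -cardsT -card_D -(card_pffun_on c0 D (setT : {set col})) -sum_nat_const.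
rewrite [X in _ <= X]big_mkcond /=; apply: leq_sum => g _.
case: ifP => g_on; last first.
  by rewrite leqn0 cards_eq0; apply/eqP/setP => i; rewrite !inE /= ?g_on ?andbF.
apply: (@leq_trans (cover_count D)).
  by apply/subset_leq_card/subsetP => i; rewrite !inE /= => /andP [].
apply: (leq_bigmax_cond (P := fun D' : {set 'I_n} => (#|D'| == #|D|) && (D' != set0))).
by rewrite eqxx -card_gt0 card_D.
Qed.

Lemma sum_card_dies_with t : 0 < t ->
  \sum_(chi : colg) #|[set i | dies_with j t chi i]| <=
    #|colg| * (2 ^ size_cap j * (#|{: col}| ^ t * max_cover t)).
Proof.
move=> t_gt0; rewrite -(card_set_pairE (fun u => dies_with j t u.1 u.2)).
rewrite -(card_imset _ encode_inj); apply: leq_trans (card_encode_range t_gt0).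
by apply/subset_leq_card/subsetP => v /imsetP [[chi i]]; rewrite inE => /encode_dies_with ? ->.
Qed.

End Round.

Definition dead_by J chi := #|[set i | process chi J i == None]|.
Definition dies_at j chi := #|[set i | (process chi j i != None) && (process chi j.+1 i == None)]|.

Lemma dead_by_le J chi : dead_by J chi <= \sum_(j < J) dies_at j chi.
Proof.
elim: J => [|J IHJ].
  by rewrite big_ord0 leqn0 cards_eq0; apply/eqP/setP => i; rewrite !inE.
rewrite big_ord_recr /=; apply: leq_trans (leq_add IHJ (leqnn _)).
apply: (@leq_trans #|[set i | process chi J i == None] :|:
  [set i | (process chi J i != None) && (process chi J.+1 i == None)]|); last exact: leq_card_setU.
apply/subset_leq_card/subsetP => i; rewrite !inE.
by case: (process chi J i).
Qed.

Lemma sum_indicator_ge1 (P : nat -> bool) a b t0 : a <= t0 < b -> P t0 ->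
  1 <= \sum_(a <= t < b) (if P t then 1 else 0).
Proof.
move=> t0_in Pt0.
by rewrite (bigD1_seq t0) ?mem_index_iota ?iota_uniq //= Pt0 leq_addr.
Qed.

Lemma dies_at_le j chi : dies_at j chi <=
   \sum_((size_cap j.+1).+1 <= t < (size_cap j).+1) #|[set i | dies_with j t chi i]|.
Proof.
rewrite /dies_at -sum1dep_card big_mkcond /=.
rewrite (eq_bigr (fun t => \sum_i (if dies_with j t chi i then 1 else 0))); last first.
  by move=> t _; rewrite -sum1dep_card big_mkcond.
rewrite exchange_big /=; apply: leq_sum => i _.
case: ifP => // /andP [].
case E: (process chi j i) => [A|] // _ /=.
rewrite {1}/process /= /shrink_round -/(process chi j) E.
case: ifP => // big_frag _.
apply: (@sum_indicator_ge1 (fun t => dies_with j t chi i) _ _ #|frag j chi i|).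
  rewrite /frag E ltnNge big_frag ltnS /=.
  have [_ card_A _] := fragment_process_live card_S E.
  exact: leq_trans (subset_leq_card (fragment_sub _ _ _)) card_A.
by rewrite /dies_with E eqxx.
Qed.

Definition dies_bound t := #|{: colg}| * (4 ^ t * (#|{: col}| ^ t * max_cover t)).

(* A fragment dying in round [j] has more than [size_cap j / 2] elements, so
   [2 ^ size_cap j <= 4 ^ t]. *)
Lemma sum_dies_at j : j < L -> \sum_(chi : colg) dies_at j chi <=
   \sum_((size_cap j.+1).+1 <= t < (size_cap j).+1) dies_bound t.
Proof.
move=> lt_jL.
apply: (@leq_trans (\sum_(chi : colg)
  \sum_((size_cap j.+1).+1 <= t < (size_cap j).+1) #|[set i | dies_with j t chi i]|)).
  by apply: leq_sum => chi _; apply: dies_at_le.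
rewrite exchange_big /= big_nat [X in _ <= X]big_nat.
apply: leq_sum => t /andP [lt_cap_t _].
apply: (leq_trans (sum_card_dies_with (Ordinal lt_jL) _)); first by lia.
rewrite leq_mul2l leq_mul2r (_ : 4 = 2 ^ 2) // -expnM leq_pexp2l ?orbT //.
have cap_half : size_cap j.+1 = size_cap j %/ 2 by rewrite /size_cap expnSr divnMA.
move: lt_cap_t; rewrite cap_half /=.
have := divn_eq (size_cap j) 2; have := ltn_pmod (size_cap j) (isT : 0 < 2); lia.
Qed.

Lemma telescope_nat (s F : nat -> nat) J : (forall j, s j.+1 <= s j) ->
  \sum_(j < J) \sum_((s j.+1).+1 <= t < (s j).+1) F t = \sum_((s J).+1 <= t < (s 0).+1) F t.
Proof.
move=> s_decr; elim: J => [|J IHJ]; first by rewrite big_ord0 big_geq.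
rewrite big_ord_recr /= IHJ addnC -big_cat_nat ?ltnS //.
by elim: J {IHJ} => // J IHJ; apply: leq_trans (s_decr _) IHJ.
Qed.

Definition fails chi := [forall i, process chi L i == None].

Lemma sum_fails_le : k < 2 ^ L ->
  \sum_(chi : colg) fails chi * ell <= \sum_(1 <= t < k.+1) dies_bound t.
Proof.
move=> lt_k2L.
have fails_dead chi : fails chi * ell <= dead_by L chi.
  case: (boolP (fails chi)) => [/forallP dead_all | _]; last by rewrite mul0n.
  rewrite mul1n -[X in X <= _](card_ord ell).
  by apply/subset_leq_card/subsetP => i _; rewrite inE dead_all.
apply: (@leq_trans (\sum_(chi : colg) \sum_(j < L) dies_at j chi)).
  by apply: leq_sum => chi _; apply: leq_trans (fails_dead chi) (dead_by_le L chi).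
rewrite exchange_big /=.
apply: (@leq_trans (\sum_(j < L) \sum_((size_cap j.+1).+1 <= t < (size_cap j).+1) dies_bound t)).
  by apply: leq_sum => j _; apply: sum_dies_at.
rewrite (telescope_nat _ (s := size_cap)).
  by rewrite /size_cap divn_small // expn0 divn1.
by move=> j; rewrite /size_cap expnSr divnMA leq_div.
Qed.

End Colourings.

Section RealBounds.
Local Open Scope R_scope.

Fixpoint rsum1 (G : nat -> R) (K : nat) : R :=
  if K is K'.+1 then rsum1 G K' + G K else 0.

Lemma INR_sum_le_rsum1 (F : nat -> nat) (G : nat -> R) K :
  (forall t, (1 <= t <= K)%N -> INR (F t) <= G t) ->
  INR (\sum_(1 <= t < K.+1) F t)%N <= rsum1 G K.
Proof.
elim: K => [|K IHK] le_FG; first by rewrite big_geq //=; lra.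
rewrite big_nat_recr //= plus_INR.
by apply: Rplus_le_compat; [apply: IHK => t t_in | ]; apply: le_FG; lia.
Qed.

Lemma rsum1_geometric (y : R) K : 0 <= y <= / 2 -> rsum1 (pow y) K <= 2 * y - 2 * y ^ K.+1.
Proof.
move=> y_in; elim: K => [|K IHK] /=; first lra.
have : 0 <= y ^ K.+1 by apply: pow_le; lra.
move: IHK; rewrite /= -/(pow y K); nra.
Qed.

Lemma rsum1_scale (a : R) G K : rsum1 (fun t => a * G t) K = a * rsum1 G K.
Proof. by elim: K => [|K IHK] /=; [lra | rewrite IHK; lra]. Qed.

Lemma INR_expn (a b : nat) : INR (a ^ b)%N = INR a ^ b.
Proof. by elim: b => [|b IHb]; rewrite ?expn0 // expnS mult_INR IHb. Qed.

Lemma log2_ge (L N : nat) : (2 ^ L <= N)%N -> INR L <= log2 (INR N).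
Proof.
move=> le_2L_N; have ln2_gt0 : 0 < ln 2 by have := ln_lt_2; lra.
have pow_le_N : 2 ^ L <= INR N by rewrite -[2]/(INR 2) -INR_expn; apply/le_INR/leP.
have pow_gt0 : 0 < 2 ^ L by apply: pow_lt; lra.
have ln_le : ln (2 ^ L) <= ln (INR N).
  by case: (Rle_lt_or_eq_dec _ _ pow_le_N) => [/(ln_increasing _ _ pow_gt0) | ->]; lra.
rewrite ln_pow in ln_le; last lra.
by rewrite /log2; apply: (Rmult_le_reg_r (ln 2)) => //; rewrite Rmult_assoc Rinv_l; lra.
Qed.

Lemma radius_large p k : (2 <= p)%N -> (1 <= k)%N ->
  0 < 32 * INR p * log2 (INR (p * k)) /\
  16 * INR (2 * p * (trunc_log 2 k).+1) <= 32 * INR p * log2 (INR (p * k)).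
Proof.
move=> p_ge2 k_ge1; set L := (trunc_log 2 k).+1.
have le_2L_pk : (2 ^ L <= p * k)%N by rewrite /L expnS leq_mul // trunc_logP.
have L_le := log2_ge le_2L_pk.
have L_ge1 : 1 <= INR L by apply: (le_INR 1); apply/leP.
have p_ge2R : 2 <= INR p by apply: (le_INR 2); apply/leP.
have -> : INR (2 * p * L) = 2 * INR p * INR L by rewrite !mult_INR [INR 2]/=; lra.
by split; nra.
Qed.

End RealBounds.

Section SpreadBound.
Local Open Scope R_scope.
Variables (n ell : nat) (S : 'I_ell -> {set 'I_n}) (k : nat) (r : R).
Hypothesis spread_S : spread k r S.
Hypothesis r_gt0 : 0 < r.

Lemma max_cover_le t : INR (max_cover S t) <= r ^ (k - t).
Proof.
rewrite /max_cover.
apply: (big_ind (fun x => INR x <= r ^ (k - t))).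
- by apply: pow_le; lra.
- by move=> a b le_a le_b; rewrite /maxn; case: ifP.
- by move=> D /andP [/eqP <- D_neq0]; apply: spread_S.
Qed.

Variables (m L : nat).
Hypothesis mL_gt0 : (0 < m * L)%N.
Hypothesis r_large : 16 * INR (m * L) <= r.

(* With [y = 4 m L / r <= 1/4], the bound for fragments of size [t] is
   [#colourings * r^k * y^t], and these sum to at most half of [#colourings * r^k]. *)
Lemma sum_dies_bound_lt : r ^ k < INR ell ->
  (2 * \sum_(1 <= t < k.+1) dies_bound S m L t < #|{: {ffun 'I_n -> 'I_m * 'I_L}}| * ell)%N.
Proof.
move=> r_lt_ell.
set a := INR #|{: {ffun 'I_n -> 'I_m * 'I_L}}|.
have a_ge1 : 1 <= a.
  rewrite /a card_ffun card_prod !card_ord INR_expn.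
  by apply: pow_R1_Rle; apply: (le_INR 1); apply/leP.
set y := 4 * INR (m * L) / r.
have mL_ge0 : 0 <= INR (m * L) := pos_INR _.
have y_in : 0 <= y <= / 4.
  split; first by apply: Rmult_le_pos; [lra | apply/Rlt_le/Rinv_0_lt_compat].
  by apply: (Rmult_le_reg_r r) => //; rewrite /y Rmult_assoc Rinv_l; lra.
have yr : y * r = 4 * INR (m * L) by rewrite /y; field; lra.
have term_le t : (1 <= t <= k)%N -> INR (dies_bound S m L t) <= a * (r ^ k * y ^ t).
  move=> /andP [_ t_le_k].
  rewrite /dies_bound !mult_INR !INR_expn card_prod !card_ord.
  apply: Rmult_le_compat_l; first exact: pos_INR.
  have -> : r ^ k = r ^ (k - t) * r ^ t by rewrite -pow_add; congr (r ^ _); lia.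
  rewrite [INR 4]/= (_ : 1 + 1 + 1 + 1 = 4); last lra.
  rewrite Rmult_assoc -Rpow_mult_distr (Rmult_comm r) yr Rpow_mult_distr.
  have := max_cover_le t.
  have : 0 <= 4 ^ t * INR (m * L) ^ t by apply: Rmult_le_pos; apply: pow_le; lra.
  nra.
have sum_le := INR_sum_le_rsum1 term_le.
rewrite (rsum1_scale a (fun t => r ^ k * y ^ t)) rsum1_scale in sum_le.
have y_half : 0 <= y <= / 2 by lra.
have geo := rsum1_geometric k y_half.
have yk_ge0 : 0 <= y ^ k.+1 by apply: pow_le; lra.
have rk_gt0 : 0 < r ^ k by apply: pow_lt.
have half : rsum1 (pow y) k <= / 2 by lra.
have le_half : a * (r ^ k * rsum1 (pow y) k) <= a * (r ^ k * / 2).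
  by apply: Rmult_le_compat_l; [lra | apply: Rmult_le_compat_l; lra].
have lt_ell : a * r ^ k < a * INR ell by apply: Rmult_lt_compat_l; lra.
by apply/ltP/INR_lt; rewrite !mult_INR -/a [INR 2]/=; lra.
Qed.

End SpreadBound.

Section GoodColouring.
Variables (n ell : nat) (S : 'I_ell -> {set 'I_n}) (k : nat).
Hypothesis card_S : forall i, #|S i| = k.
Variables (m L : nat).

Notation colg := {ffun 'I_n -> 'I_m * 'I_L}.

Definition colour_class (chi : colg) (c : 'I_m) := [set x | (chi x).1 == c].

Lemma exists_colouring_few_fails p : k < 2 ^ L ->
  m * \sum_(1 <= t < k.+1) dies_bound S m L t < p * #|{: colg}| * ell ->
  exists chi : colg, #|[set c | fails S k c chi]| < p.
Proof.
move=> lt_k2L avg_lt.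
have card_fails (chi : colg) : #|[set c | fails S k c chi]| = \sum_(c : 'I_m) fails S k c chi.
  by rewrite -sum1dep_card big_mkcond.
have sum_lt : \sum_(chi : colg) #|[set c | fails S k c chi]| < p * #|{: colg}|.
  have ell_gt0 : 0 < ell.
    by rewrite lt0n; apply: contraTneq avg_lt => ell0; rewrite [X in _ < _ * X]ell0 muln0.
  rewrite -(ltn_pmul2r ell_gt0); apply: leq_ltn_trans avg_lt.
  rewrite big_distrl /=; under eq_bigr do rewrite card_fails big_distrl.
  rewrite exchange_big /= -[X in _ <= X * _]card_ord -sum_nat_const.
  by apply: leq_sum => c _; apply: sum_fails_le.
apply/existsP; apply: contraLR sum_lt => /existsPn all_ge.
rewrite -leqNgt mulnC -sum_nat_const; apply: leq_sum => chi _.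
by rewrite leqNgt all_ge.
Qed.

Lemma colour_class_contains chi c : k < 2 ^ L -> ~~ fails S k c chi ->
  exists i, S i \subset colour_class chi c.
Proof.
move=> lt_k2L /forallPn [i]; case E: (process S k c chi L i) => [A|] // _.
have [_ card_A _] := fragment_process_live card_S E.
have A0 : A = set0 by apply/eqP; rewrite -cards_eq0 -leqn0 -(divn_small lt_k2L).
have [i' cover] := fragment_process_cover E.
exists i'; apply/subsetP => x /cover [|[j' _]]; first by rewrite A0 inE.
by rewrite !inE => /andP [].
Qed.

Lemma disjoint_sets_of_colouring p (chi : colg) : 0 < k -> k < 2 ^ L ->
  #|[set c | fails S k c chi]| + p <= m ->
  exists f : 'I_p -> 'I_ell,
    injective f /\ (forall a b : 'I_p, a != b -> [disjoint S (f a) & S (f b)]).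
Proof.
move=> k_gt0 lt_k2L card_fails.
pose good := [set c : 'I_m | ~~ fails S k c chi].
have le_p_good : p <= #|good|.
  have -> : good = ~: [set c | fails S k c chi] by apply/setP => c; rewrite !inE.
  by rewrite cardsCs setCK card_ord; lia.
pose cg (a : 'I_p) : 'I_m := enum_val (widen_ord le_p_good a).
have cg_inj : injective cg.
  by move=> a b /enum_val_inj /(congr1 val) /= eq_ab; apply: val_inj.
have /fin_all_exists [f sub_f] : forall a, exists i, S i \subset colour_class chi (cg a).
  move=> a; apply: colour_class_contains => //.
  by have := enum_valP (widen_ord le_p_good a); rewrite inE.
have disj_f a b : a != b -> [disjoint S (f a) & S (f b)].
  move=> neq_ab; apply: disjointWl (sub_f a) (disjointWr (sub_f b) _).
  rewrite disjoints_subset; apply/subsetP => x; rewrite !inE => /eqP ->.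
  by apply: contra neq_ab => /eqP /cg_inj ->.
exists f; split=> // a b eq_f; apply/eqP; apply: contraT => neq_ab.
have := disj_f a b neq_ab.
by rewrite -setI_eq0 eq_f setIid -cards_eq0 card_S eqn0Ngt k_gt0.
Qed.

End GoodColouring.

Section MainBound.
Local Open Scope R_scope.

Theorem spread_disjoint_family p k n ell (S : 'I_ell -> {set 'I_n}) :
  (2 <= p)%N -> (1 <= k)%N -> (forall i, #|S i| = k) ->
  let r := 32 * INR p * log2 (INR (p * k)) in
  r ^ k < INR ell -> spread k r S ->
  exists f : 'I_p -> 'I_ell,
    injective f /\ (forall a b : 'I_p, a != b -> [disjoint S (f a) & S (f b)]).
Proof.
move=> p_ge2 k_ge1 card_S r r_lt_ell spread_S.
pose L := (trunc_log 2 k).+1; pose m := (2 * p)%N.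
have lt_k2L : (k < 2 ^ L)%N by apply: trunc_log_ltn.
have [r_gt0 r_large] := radius_large p_ge2 k_ge1.
have mL_gt0 : (0 < m * L)%N by rewrite muln_gt0 /m; apply/andP; split; lia.
have sum_lt := sum_dies_bound_lt spread_S r_gt0 mL_gt0 r_large r_lt_ell.
have [chi few_fails] : exists chi : {ffun 'I_n -> 'I_m * 'I_L},
    (#|[set c | fails S k c chi]| < p)%N.
  apply: (exists_colouring_few_fails card_S lt_k2L).
  by rewrite -(ltn_pmul2l (ltnW p_ge2)) !mulnA (mulnC p 2%N) in sum_lt.
apply: (disjoint_sets_of_colouring card_S (chi := chi)) => //.
by move: few_fails; rewrite /m; lia.
Qed.

End MainBound.

(* Importing [Reals] again rebinds [%R] to [R_scope] (MathComp binds it to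
   [ring_scope]), as in the statement below. *)
From Stdlib Require Import Reals.

Theorem lemma2 :
  exists alpha : R, (1 < alpha)%R /\
  forall (p k n ell : nat) (S : 'I_ell -> {set 'I_n}),
    (2 <= p)%N -> (1 <= k)%N -> (1 <= n)%N ->
    (forall i, #|S i| = k) ->
    let r := (alpha * INR p * log2 (INR (p * k)))%R in
    (r ^ k < INR ell)%R ->
    spread k r S ->
    exists f : 'I_p -> 'I_ell,
      injective f /\
      (forall a b : 'I_p, a != b -> [disjoint S (f a) & S (f b)]).
Proof.
exists 32%R; split; first lra.
by move=> p k n ell S p_ge2 k_ge1 _; apply: spread_disjoint_family.
Qed.
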